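(* Let $\mathcal{H}_1,\dots,\mathcal{H}_J$ be real or complex Hilbert spaces and $\Sigma_j\subset\mathcal{H}_j$ cones. Let $\mathcal{H}=\mathcal{H}_1\times\dots\times\mathcal{H}_J$ with inner product $\langle(x_j)_j,(y_j)_j\rangle=\sum_j\langle x_j,y_j\rangle_{\mathcal{H}_j}$ and $\Sigma=\Sigma_1\times\dots\times\Sigma_J$. Then for all $(x_1,\dots,x_J)\in\mathcal{H}$, $$\|(x_1,\dots,x_J)\|_\Sigma^2=\sum_{j=1}^J\|x_j\|_{\Sigma_j}^2.$$
   Context: A cone is a set closed under multiplication by nonnegative scalars. For a cone $C$ in a Hilbert space with unit sphere $S(1)$, $\|x\|_C=\inf\{t\ge0:x\in t\cdot\overline{\mathrm{conv}}(C\cap S(1))\}$, with value $+\infty$ if no such $t$ exists (and the usual convention $(+\infty)^2=+\infty$, sums involving $+\infty$ equal $+\infty$). *)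

From HB Require Import structures.
From mathcomp Require Import all_boot all_order all_algebra.
From mathcomp Require Import all_classical all_reals ereal.
From mathcomp Require Import complex.
Set Implicit Arguments. Unset Strict Implicit. Unset Printing Implicit Defensive.
Import Order.TTheory GRing.Theory Num.Theory.
Local Open Scope ring_scope.
Local Open Scope classical_set_scope.

(* Hilbert spaces over a scalar field K that is either R or C = R[i].        *)
(* The scalar field is described by: conj (conjugation), re (real part) and  *)
(* ofR (embedding of the reals).  Real case: K = R, conj = re = ofR = id.    *)
(* Complex case: K = R[i], conj = conjc, re = Re, ofR = x |-> x%:C.          *)
Section HilbertDef.
Variables (R : realType) (K : fieldType) (conj : K -> K) (re : K -> R).

Record hilbert_axioms (V : lmodType K) (inner : V -> V -> K) : Prop := {
  inner_addl : forall x y z, inner (x + y) z = inner x z + inner y z;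
  inner_scalel : forall (a : K) x y, inner (a *: x) y = a * inner x y;
  inner_conj : forall x y, inner y x = conj (inner x y);
  inner_ge0 : forall x, 0 <= re (inner x x);
  inner_eq0 : forall x, re (inner x x) = 0 -> x = 0;
  inner_complete : forall u : nat -> V,
    (forall e : R, 0 < e -> exists N : nat, forall m n : nat,
        (N <= m)%N -> (N <= n)%N ->
        Num.sqrt (re (inner (u m - u n) (u m - u n))) < e) ->
    exists l : V, forall e : R, 0 < e -> exists N : nat, forall n : nat,
        (N <= n)%N -> Num.sqrt (re (inner (u n - l) (u n - l))) < e }.

Structure hilbertSpace := HilbertSpace {
  hcarrier :> lmodType K;
  hinner : hcarrier -> hcarrier -> K;
  hilbertP : hilbert_axioms hinner }.

End HilbertDef.

Section Gauge.
Variables (R : realType) (V : Type) (add : V -> V -> V) (zero : V)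
  (opp : V -> V) (scale : R -> V -> V) (norm : V -> R).

Definition is_cone (C : set V) : Prop :=
  forall (t : R) (x : V), 0 <= t -> C x -> C (scale t x).

Definition unit_sphere : set V := [set x | norm x = 1].

Definition conv_hull (A : set V) : set V :=
  [set x | exists (n : nat) (w : 'I_n -> R) (a : 'I_n -> V),
     [/\ (forall i, 0 <= w i), \sum_(i < n) w i = 1, (forall i, A (a i)) &
         x = \big[add/zero]_(i < n) scale (w i) (a i)]].

Definition norm_closure (A : set V) : set V :=
  [set x | forall e : R, 0 < e -> exists2 a, A a & norm (add x (opp a)) < e].

Definition dilate (t : R) (A : set V) : set V := [set scale t a | a in A].

Definition cone_gauge (C : set V) (x : V) : \bar R :=
  ereal_inf [set (t%:E)%E | t in
    [set t : R | 0 <= t /\ dilate t (norm_closure (conv_hull (C `&` unit_sphere))) x]].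

End Gauge.

Section HilbertGauge.
Variables (R : realType) (K : fieldType) (conj : K -> K) (re : K -> R)
  (ofR : R -> K).

Definition hnorm (H : hilbertSpace conj re) (x : H) : R :=
  Num.sqrt (re (hinner x x)).

Definition hcone (H : hilbertSpace conj re) (C : set H) : Prop :=
  is_cone (fun (t : R) (v : H) => ofR t *: v) C.

Definition hgauge (H : hilbertSpace conj re) (C : set H) (x : H) : \bar R :=
  cone_gauge +%R 0 -%R (fun (t : R) (v : H) => ofR t *: v) (@hnorm H) C x.

Variables (J : nat) (H : 'I_J -> hilbertSpace conj re).

Definition prod_add (x y : forall j, H j) : forall j, H j := fun j => x j + y j.
Definition prod_zero : forall j, H j := fun j => 0.
Definition prod_opp (x : forall j, H j) : forall j, H j := fun j => - x j.
Definition prod_scale (t : R) (x : forall j, H j) : forall j, H j :=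
  fun j => ofR t *: x j.
Definition prod_inner (x y : forall j, H j) : K :=
  \sum_(j < J) hinner (x j) (y j).
Definition prod_norm (x : forall j, H j) : R := Num.sqrt (re (prod_inner x x)).

Definition prod_set (Sigma : forall j, set (H j)) : set (forall j, H j) :=
  [set x | forall j, Sigma j (x j)].

Definition prod_gauge (C : set (forall j, H j)) (x : forall j, H j) : \bar R :=
  cone_gauge prod_add prod_zero prod_opp prod_scale prod_norm C x.

End HilbertGauge.

(* Call H_j = closure (conv (Sigma_j /\ S(1))) and H the analogous set of the
   product.  Every point of conv (Sigma /\ S(1)) has components c_j z_j with
   z_j in conv (Sigma_j /\ S(1)) and c >= 0 in the Euclidean unit ball (the bound
   on c is Jensen's inequality); by compactness of that ball the same holds for H
   with z_j in H_j.  Conversely, if c >= 0 has |c| = 1 and z_j in H_j, then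
   (c_j z_j)_j lies in H, since this map is affine in each z_j separately.  Thus
   x in t H yields x_j in (t c_j) H_j with sum_j c_j^2 <= 1, while x_j in t_j H_j
   for all j yields x in (sum_j t_j^2)^(1/2) H; taking infima, the squared gauge
   of x is the sum of the squared gauges of its components. *)

From HB Require Import structures.
From mathcomp Require Import all_boot all_order all_algebra.
From mathcomp Require Import all_classical all_reals ereal.
From mathcomp Require Import complex.
From mathcomp Require Import lra ring.
From mathcomp Require Import topology normedtype.
Set Implicit Arguments. Unset Strict Implicit. Unset Printing Implicit Defensive.
Import Order.TTheory GRing.Theory Num.Theory.
Import numFieldNormedType.Exports.
Local Open Scope ring_scope.
Local Open Scope classical_set_scope.

Section UnitBallCoefficients.
Variable R : realType.

Definition nneg_unit_ball n (c : 'I_n -> R) :=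
  (forall j, 0 <= c j) /\ \sum_j c j ^+ 2 <= 1.

Lemma nneg_unit_ball_le1 n (c : 'I_n -> R) j : nneg_unit_ball c -> c j <= 1.
Proof.
case=> c_ge0 c_sum; have : c j ^+ 2 <= 1.
  apply: le_trans c_sum; rewrite (bigD1 j) //= lerDl.
  by apply: sumr_ge0 => k _; exact: sqr_ge0.
by have := c_ge0 j; nra.
Qed.

Lemma convex_comb_sqr_le n (w m : 'I_n -> R) :
  (forall i, 0 <= w i) -> \sum_i w i = 1 ->
  (\sum_i w i * m i) ^+ 2 <= \sum_i w i * m i ^+ 2.
Proof.
move=> w_ge0 w_sum1; set M := \sum_i w i * m i.
have : 0 <= \sum_i w i * (m i - M) ^+ 2.
  by apply: sumr_ge0 => i _; rewrite mulr_ge0 ?sqr_ge0.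
have -> : \sum_i w i * (m i - M) ^+ 2 =
    \sum_i w i * m i ^+ 2 - 2 * M * M + M ^+ 2 * \sum_i w i.
  rewrite (eq_bigr (fun i => w i * m i ^+ 2 - 2 * M * (w i * m i) + M ^+ 2 * w i)).
    by rewrite big_split sumrB /= -!mulr_sumr.
  by move=> i _; ring.
rewrite w_sum1; nra.
Qed.

Lemma nneg_unit_ball_closed n (p : 'I_n -> R) :
  (forall d, 0 < d -> exists2 c, nneg_unit_ball c & forall j, `|c j - p j| < d) ->
  nneg_unit_ball p.
Proof.
move=> approx; have p_ge0 j : 0 <= p j.
  apply/ler_addgt0Pr => d d_gt0.
  have [c [c_ge0 _] /(_ j)] := approx d d_gt0; rewrite ltr_norml.
  by have := c_ge0 j; lra.
split=> //; apply/ler_addgt0Pr => e e_gt0.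
pose d := Num.min 1 (e / (3 * n%:R + 1)).
have d_gt0 : 0 < d by rewrite lt_min ltr01 divr_gt0 // ltr_wpDl // mulr_ge0.
have d_le1 : d <= 1 by rewrite ge_min lexx.
have de : d * (3 * n%:R + 1) <= e.
  by rewrite -ler_pdivlMr ?ltr_wpDl ?mulr_ge0 // ge_min lexx orbT.
have [c c_ball close] := approx d d_gt0.
apply: le_trans (_ : \sum_j (c j ^+ 2 + 3 * d) <= _).
  apply: ler_sum => j _; have := close j; rewrite ltr_norml.
  (* p j <= c j + d <= 2, hence p j ^+ 2 - c j ^+ 2 = (p j - c j) (p j + c j) <= 3 d *)
  have := nneg_unit_ball_le1 j c_ball; have := p_ge0 j; have := proj1 c_ball j; nra.
rewrite big_split /= sumr_const card_ord lerD ?(proj2 c_ball) //.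
by rewrite -mulr_natr; nra.
Qed.

Lemma nneg_unit_ball_cluster n (P : R -> set ('I_n -> R)) :
  (forall e, 0 < e -> P e !=set0) ->
  (forall e e', 0 < e <= e' -> P e `<=` P e') ->
  (forall e, 0 < e -> P e `<=` @nneg_unit_ball n) ->
  exists2 p, nneg_unit_ball p &
    forall e d, 0 < e -> 0 < d -> exists2 c, P e c & forall j, `|c j - p j| < d.
Proof.
move=> P_ne P_mono P_ball.
pose B e := [set \row_j c j | c in P e].
pose F := filter_from [set e : R | 0 < e] B.
have F_proper : ProperFilter F.
  apply: filter_from_proper; last by move=> e /P_ne[c Pc]; exists (\row_j c j), c.
  apply: filter_from_filter; first by exists 1; rewrite /= ltr01.
  move=> e e' e_gt0 e'_gt0; exists (Num.min e e'); first by rewrite /= lt_min e_gt0.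
  move=> _ [c Pc <-]; split; exists c => //; apply: P_mono Pc;
    by rewrite lt_min e_gt0 e'_gt0 ge_min lexx ?orbT.
have F_cube : F [set v : 'rV[R]_n | forall j, `[0, 1]%classic (v ord0 j)].
  exists 1; first by rewrite /= ltr01.
  move=> _ [c Pc <-] j; rewrite mxE /= in_itv /=.
  have c_ball := P_ball 1 ltr01 c Pc.
  by rewrite (proj1 c_ball j) nneg_unit_ball_le1.
have [v [_ v_cluster]] :=
  @rV_compact R n (fun=> `[0, 1]%classic) (fun=> @segment_compact R 0 1) F F_proper F_cube.
have near_v e d : 0 < e -> 0 < d ->
    exists2 c, P e c & forall j, `|c j - v ord0 j| < d.
  move=> e_gt0 d_gt0.
  have [_ [[c Pc <-] [_ cv]]] := v_cluster (B e) (ball v d)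
    (ex_intro2 _ _ e e_gt0 (fun _ h => h)) (nbhsx_ballx v d d_gt0).
  by exists c => // j; move: (cv ord0 j); rewrite /ball /= mxE distrC.
exists (fun j => v ord0 j) => //; apply: nneg_unit_ball_closed => d d_gt0.
by have [c Pc close] := near_v 1 d ltr01 d_gt0; exists c => //; exact: P_ball Pc.
Qed.

End UnitBallCoefficients.

Section InfOfSquareSums.
Variables (R : realType) (n : nat) (S : set R) (T : 'I_n -> set R).
Hypotheses (S_ge0 : forall {t}, S t -> 0 <= t) (T_ge0 : forall {j t}, T j t -> 0 <= t).
Hypothesis S_split : forall {t}, S t ->
  exists2 c : 'I_n -> R, nneg_unit_ball c & forall j, T j (t * c j).
Hypothesis S_merge : forall {ts : 'I_n -> R}, (forall j, T j (ts j)) ->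
  S (Num.sqrt (\sum_j ts j ^+ 2)).

Lemma sum_sqr_inf_le (Tne : forall j, T j !=set0) (Sne : S !=set0) :
  \sum_j inf (T j) ^+ 2 <= inf S ^+ 2.
Proof.
have inf_ge0 j : 0 <= inf (T j) := lb_le_inf (Tne j) (@T_ge0 j).
have infS_ge0 : 0 <= inf S := lb_le_inf Sne (@S_ge0).
have sum_ge0 : 0 <= \sum_j inf (T j) ^+ 2 by apply: sumr_ge0 => j _; exact: sqr_ge0.
rewrite -[leLHS]sqr_sqrtr // ler_pXn2r ?nnegrE ?sqrtr_ge0 //.
apply: lb_le_inf => // t St; have [c [c_ge0 c_le1] Tc] := S_split St.
rewrite -[t](ger0_norm (S_ge0 St)) -sqrtr_sqr ler_sqrt ?sqr_ge0 //.
apply: le_trans (_ : \sum_j (t * c j) ^+ 2 <= _).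
  apply: ler_sum => j _; rewrite ler_pXn2r ?nnegrE ?inf_ge0 ?(T_ge0 (Tc j)) //.
  by apply: ge_inf (Tc j); exists 0 => s /T_ge0.
under eq_bigr do rewrite exprMn.
by rewrite -mulr_sumr ler_piMr ?sqr_ge0.
Qed.

Lemma inf_sqr_le_sum (Tne : forall j, T j !=set0) :
  inf S ^+ 2 <= \sum_j inf (T j) ^+ 2.
Proof.
apply/ler_addgt0Pr => e e_gt0; set d := e / n.+1%:R.
have d_gt0 : 0 < d by rewrite divr_gt0.
have near_inf j : exists t, T j t /\ t ^+ 2 <= inf (T j) ^+ 2 + d.
  have inf_ge0 : 0 <= inf (T j) := lb_le_inf (Tne j) (@T_ge0 j).
  have : inf (T j) < Num.sqrt (inf (T j) ^+ 2 + d).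
    rewrite -[X in X < _](ger0_norm inf_ge0) -sqrtr_sqr ltr_sqrt ?ltrDl //.
    by rewrite ltr_wpDl ?sqr_ge0.
  case/(inf_lt (Tne j)) => t Tt /ltW t_le; exists t; split => //.
  move: t_le; rewrite -(ler_pXn2r (n:=2)) ?nnegrE ?sqrtr_ge0 ?(T_ge0 Tt) //.
  by rewrite sqr_sqrtr // addr_ge0 ?sqr_ge0 ?ltW.
have [ts Tts] := choice near_inf.
have S_ts := S_merge (fun j => proj1 (Tts j)).
have infS_ge0 : 0 <= inf S := lb_le_inf (ex_intro _ _ S_ts) (@S_ge0).
have sum_ge0 : 0 <= \sum_j ts j ^+ 2 by apply: sumr_ge0 => j _; exact: sqr_ge0.
apply: le_trans (_ : Num.sqrt (\sum_j ts j ^+ 2) ^+ 2 <= _).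
  rewrite ler_pXn2r ?nnegrE ?sqrtr_ge0 //.
  by apply: ge_inf S_ts; exists 0 => s /S_ge0.
rewrite sqr_sqrtr //; apply: le_trans (ler_sum _ (fun j _ => proj2 (Tts j))) _.
rewrite big_split /= sumr_const card_ord lerD2l -mulr_natr mulrAC.
by rewrite ler_pdivrMr ?ltr0Sn // ler_pM2l // ler_nat.
Qed.

Lemma ereal_inf_sqr_sum :
  (ereal_inf (EFin @` S) * ereal_inf (EFin @` S))%E
  = (\sum_j ereal_inf (EFin @` T j) * ereal_inf (EFin @` T j))%E.
Proof.
have [Tne|/existsNP[j0 /set0P/negP/negbNE/eqP Tj0]] :=
  pselect (forall j, T j !=set0); last first.
  have -> : S = set0.
    by apply/seteqP; split=> // t /S_split[c _ /(_ j0)]; rewrite Tj0.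
  rewrite (bigD1 j0) //= Tj0 !image_set0 ereal_inf0 mulyy addye //.
  rewrite gt_eqF // (lt_le_trans ltNy0) // sume_ge0 // => j _.
  by apply: mule_ge0; apply/ereal_infP => _ [t /T_ge0 t_ge0 <-].
have [ts Tts] := choice (fun j => Tne j).
have Sne : S !=set0 by exists (Num.sqrt (\sum_j ts j ^+ 2)); exact: S_merge.
have S_lb : has_lbound S by exists 0 => t /S_ge0.
have T_lb j : has_lbound (T j) by exists 0 => t /T_ge0.
under eq_bigr => j _ do rewrite ereal_inf_EFin // -EFinM.
rewrite ereal_inf_EFin // -EFinM sumEFin; congr EFin.
rewrite -!expr2; apply/eqP; rewrite eq_le inf_sqr_le_sum // sum_sqr_inf_le //.
Qed.

End InfOfSquareSums.

Section ScalarField.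
Variables (R : realType) (K : fieldType) (conj : {rmorphism K -> K})
  (re : {additive K -> R}) (ofR : {rmorphism R -> K}).
Hypotheses (conj_ofR : forall t, conj (ofR t) = ofR t)
  (re_conj : forall a, re (conj a) = re a)
  (re_ofRM : forall t a, re (ofR t * a) = t * re a).

Section HilbertSpaceFacts.

Variable V : hilbertSpace conj re.
Local Notation inner := (@hinner R K conj re V).
Local Notation hilbertV := (hilbertP V).
Local Notation hnorm := (@hnorm R K conj re V).

Lemma inner0l y : inner 0 y = 0.
Proof. by rewrite -(scale0r (0 : V)) (inner_scalel hilbertV) mul0r. Qed.

Lemma innerDr x y z : inner x (y + z) = inner x y + inner x z.
Proof.
by rewrite (inner_conj hilbertV) (inner_addl hilbertV) rmorphD -!(inner_conj hilbertV).
Qed.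

Lemma innerZr t x y : inner x (ofR t *: y) = ofR t * inner x y.
Proof.
rewrite (inner_conj hilbertV) (inner_scalel hilbertV) rmorphM conj_ofR.
by rewrite -(inner_conj hilbertV).
Qed.

Lemma inner0r x : inner x 0 = 0.
Proof. by rewrite (inner_conj hilbertV) inner0l rmorph0. Qed.

Lemma re_innerC x y : re (inner x y) = re (inner y x).
Proof. by rewrite (inner_conj hilbertV) re_conj. Qed.

Definition hnorm2 (x : V) := re (inner x x).

Lemma hnorm2_ge0 x : 0 <= hnorm2 x.
Proof. exact: (inner_ge0 hilbertV). Qed.

Lemma hnorm2D x y : hnorm2 (x + y) = hnorm2 x + 2 * re (inner x y) + hnorm2 y.
Proof. rewrite /hnorm2 (inner_addl hilbertV) !innerDr !raddfD (re_innerC y x); lra. Qed.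

Lemma hnorm2Z t x : hnorm2 (ofR t *: x) = t ^+ 2 * hnorm2 x.
Proof. by rewrite /hnorm2 (inner_scalel hilbertV) innerZr mulrA -rmorphM re_ofRM expr2. Qed.

Lemma re_inner_sqr_le x y : re (inner x y) ^+ 2 <= hnorm2 x * hnorm2 y.
Proof.
have [y0|y_neq0] := eqVneq (hnorm2 y) 0.
  have -> : y = 0 by apply: (inner_eq0 hilbertV).
  by rewrite inner0r raddf0 expr0n /= mulr_ge0 ?hnorm2_ge0.
have y_gt0 : 0 < hnorm2 y by rewrite lt_def y_neq0 hnorm2_ge0.
set b := re (inner x y); set l := - b / hnorm2 y.
(* l minimises t |-> hnorm2 (x + t y) *)
have := hnorm2_ge0 (x + ofR l *: y).
rewrite hnorm2D hnorm2Z innerZr re_ofRM -/b => /(mulr_ge0 (hnorm2_ge0 y)).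
rewrite (_ : hnorm2 y * _ = hnorm2 y * hnorm2 x - b ^+ 2); first by rewrite subr_ge0 mulrC.
by rewrite /l; field.
Qed.

Lemma hnormE x : hnorm x = Num.sqrt (hnorm2 x).
Proof. by []. Qed.

Lemma hnorm_ge0 x : 0 <= hnorm x.
Proof. exact: sqrtr_ge0. Qed.

Lemma sqr_hnorm x : hnorm x ^+ 2 = hnorm2 x.
Proof. by rewrite sqr_sqrtr // hnorm2_ge0. Qed.

Lemma hnormZ t x : hnorm (ofR t *: x) = `|t| * hnorm x.
Proof. by rewrite hnormE hnorm2Z sqrtrM ?sqrtr_sqr // sqr_ge0. Qed.

Lemma hnorm0 : hnorm 0 = 0.
Proof. by rewrite hnormE /hnorm2 inner0l raddf0 sqrtr0. Qed.

Lemma hnorm_eq0 x : hnorm x = 0 -> x = 0.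
Proof.
move/eqP; rewrite sqrtr_eq0 => x_le0; apply: (inner_eq0 hilbertV).
by apply/eqP; rewrite eq_le x_le0 hnorm2_ge0.
Qed.

Lemma ler_hnormD x y : hnorm (x + y) <= hnorm x + hnorm y.
Proof.
have re_le : re (inner x y) <= hnorm x * hnorm y.
  apply: le_trans (ler_norm _) _; rewrite -sqrtr_sqr !hnormE -sqrtrM ?hnorm2_ge0 //.
  by rewrite ler_sqrt ?mulr_ge0 ?hnorm2_ge0 // re_inner_sqr_le.
rewrite -(ler_pXn2r (n:=2)) ?nnegrE ?addr_ge0 ?hnorm_ge0 //.
rewrite sqr_hnorm hnorm2D sqrrD !sqr_hnorm; lra.
Qed.

Lemma hnorm_sum_le n (w : 'I_n -> R) (a : 'I_n -> V) : (forall i, 0 <= w i) ->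
  hnorm (\sum_(i < n) ofR (w i) *: a i) <= \sum_(i < n) w i * hnorm (a i).
Proof.
move=> w_ge0; elim/big_rec2: _ => [|i y1 y2 _ IH]; first by rewrite hnorm0.
apply: le_trans (ler_hnormD _ _) _; rewrite hnormZ ger0_norm //; exact: lerD.
Qed.

End HilbertSpaceFacts.

Section ConeHull.
Variable V : hilbertSpace conj re.
Local Notation hnorm := (@hnorm R K conj re V).
Variable Sigma : set V.
Hypotheses (Sigma_cone : hcone ofR Sigma) (Sigma_nontrivial : exists2 s, Sigma s & s <> 0).

Local Notation scale := (fun (t : R) (v : V) => ofR t *: v).

Definition cone_atoms : set V := Sigma `&` unit_sphere hnorm.
Definition atom_hull : set V := conv_hull +%R 0 scale cone_atoms.
Definition closed_hull : set V := norm_closure +%R -%R hnorm atom_hull.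

Lemma cone_atoms_normalize s : Sigma s -> s <> 0 -> cone_atoms (ofR (hnorm s)^-1 *: s).
Proof.
move=> Ss s_neq0; have s_gt0 : 0 < hnorm s.
  by rewrite lt_def hnorm_ge0 andbT; apply/eqP => /hnorm_eq0.
split; first by apply: Sigma_cone; rewrite // invr_ge0 ltW.
by rewrite /unit_sphere /= hnormZ ger0_norm ?invr_ge0 ?ltW // mulVf ?gt_eqF.
Qed.

Lemma cone_atoms_nonempty : exists a, cone_atoms a.
Proof.
have [s Ss s_neq0] := Sigma_nontrivial.
by exists (ofR (hnorm s)^-1 *: s); exact: cone_atoms_normalize.
Qed.

Lemma atom_hull_atom a : cone_atoms a -> atom_hull a.
Proof.
move=> Aa; exists 1%N, (fun=> 1), (fun=> a); split => //; first by rewrite big_ord1.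
by rewrite big_ord1 rmorph1 scale1r.
Qed.

Lemma atom_hull_norm_le1 z : atom_hull z -> hnorm z <= 1.
Proof.
case=> n [w [a [w_ge0 w_sum1 a_atom ->]]].
apply: le_trans (hnorm_sum_le _ w_ge0) _.
by rewrite -w_sum1; apply: ler_sum => i _; rewrite (proj2 (a_atom i)) mulr1.
Qed.

Lemma atom_hull_sub_closed z : atom_hull z -> closed_hull z.
Proof. by move=> z_hull e e_gt0; exists z; rewrite // subrr hnorm0. Qed.

Definition dilations (v : V) : set R := [set t | 0 <= t /\ dilate scale t closed_hull v].

Lemma hgaugeE v : hgauge ofR Sigma v = ereal_inf (EFin @` dilations v).
Proof. by []. Qed.

Lemma hnorm_scale_hull_le c z : atom_hull z -> hnorm (ofR c *: z) <= `|c|.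
Proof.
by move=> z_hull; rewrite hnormZ -[leRHS]mulr1 ler_wpM2l ?atom_hull_norm_le1.
Qed.

Lemma cone_comb_scaled_hull n (w : 'I_n -> R) (a : 'I_n -> V) :
  (forall i, 0 <= w i) -> (forall i, Sigma (a i)) ->
  exists2 z, atom_hull z &
    \sum_i ofR (w i) *: a i = ofR (\sum_i w i * hnorm (a i)) *: z.
Proof.
move=> w_ge0 Sa; set c := \sum_i w i * _.
have wm_ge0 i : 0 <= w i * hnorm (a i) by rewrite mulr_ge0 ?hnorm_ge0.
have [a0 a0_atom] := cone_atoms_nonempty.
have [c0|c_neq0] := eqVneq c 0.
  exists a0; first exact: atom_hull_atom.
  rewrite c0 rmorph0 scale0r big1 // => i _.
  have /eqP := @psumr_eq0P _ _ _ (fun i => w i * hnorm (a i)) (fun i _ => wm_ge0 i) c0 i isT.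
  rewrite mulf_eq0 => /orP[/eqP->|/eqP/hnorm_eq0->]; last by rewrite scaler0.
  by rewrite rmorph0 scale0r.
pose u i := if hnorm (a i) == 0 then a0 else ofR (hnorm (a i))^-1 *: a i.
exists (\sum_i ofR (w i * hnorm (a i) / c) *: u i).
  exists n, (fun i => w i * hnorm (a i) / c), u; split => //.
  - by move=> i; rewrite divr_ge0 // -/c sumr_ge0.
  - by rewrite -mulr_suml divff.
  - move=> i; rewrite /u; case: eqP => // /eqP a_neq0.
    by apply: cone_atoms_normalize => // a0'; rewrite a0' hnorm0 eqxx in a_neq0.
rewrite scaler_sumr; apply: eq_bigr => i _; rewrite scalerA -rmorphM /u.
case: eqP => [/hnorm_eq0 ->|/eqP a_neq0].
  by rewrite hnorm0 !(mulr0, mul0r) rmorph0 scale0r scaler0.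
by rewrite scalerA -rmorphM; congr (ofR _ *: _); field; rewrite c_neq0 a_neq0.
Qed.

Lemma closed_hull_approx y p :
  (forall e, 0 < e -> exists c z,
    [/\ atom_hull z, `|c - p| < e & hnorm (y - ofR c *: z) < e]) ->
  exists2 b, closed_hull b & y = ofR p *: b.
Proof.
have [a0 a0_atom] := cone_atoms_nonempty.
case: (eqVneq p 0) => [->|p_neq0] approx.
  exists a0.
    by move=> e e_gt0; exists a0; [exact: atom_hull_atom | rewrite subrr hnorm0].
  rewrite rmorph0 scale0r; apply: hnorm_eq0; apply/eqP; rewrite eq_le hnorm_ge0 andbT.
  apply/ler_addgt0Pr => e e_gt0; rewrite add0r.
  have [c [z [z_hull c_small close]]] := approx (e / 2) (divr_gt0 e_gt0 (ltr0Sn _ 1)).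
  rewrite subr0 in c_small; rewrite -(subrK (ofR c *: z) y) [e]splitr.
  apply: le_trans (ler_hnormD _ _) _; apply: lerD; first exact: ltW.
  exact/(le_trans (hnorm_scale_hull_le c z_hull))/ltW.
exists (ofR p^-1 *: y); last by rewrite scalerA -rmorphM mulfV // rmorph1 scale1r.
move=> e e_gt0; have pe_gt0 : 0 < `|p| * e / 2 by rewrite divr_gt0 ?mulr_gt0 ?normr_gt0.
have [c [z [z_hull c_close y_close]]] := approx _ pe_gt0.
exists z => //.
have -> : ofR p^-1 *: y + - z = ofR p^-1 *: ((y - ofR c *: z) + ofR (c - p) *: z).
  rewrite rmorphB scalerBl addrA subrK scalerBr scalerA -rmorphM mulVf //.
  by rewrite rmorph1 scale1r.
rewrite hnormZ normfV ltr_pdivrMl ?normr_gt0 // [_ * e]splitr.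
apply: le_lt_trans (ler_hnormD _ _) (ltr_leD y_close _).
exact/(le_trans (hnorm_scale_hull_le _ z_hull))/ltW.
Qed.

End ConeHull.

Section Product.
Variables (J : nat) (H : 'I_J -> hilbertSpace conj re) (Sigma : forall j, set (H j)).
Arguments Sigma : clear implicits.
Hypotheses (Sigma_cone : forall j, hcone ofR (Sigma j))
  (Sigma_nontrivial : forall j, exists2 s, Sigma j s & s <> 0).
Arguments Sigma_cone : clear implicits.
Arguments Sigma_nontrivial : clear implicits.

Local Notation prod_scale := (@prod_scale R K conj re ofR J H).
Local Notation prod_norm := (@prod_norm R K conj re J H).

Definition prod_atoms : set (forall j, H j) := prod_set Sigma `&` unit_sphere prod_norm.
Definition prod_hull := conv_hull (@prod_add _ _ _ _ _ H) (@prod_zero _ _ _ _ _ H)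
  prod_scale prod_atoms.
Definition prod_closed_hull := norm_closure (@prod_add _ _ _ _ _ H)
  (@prod_opp _ _ _ _ _ H) prod_norm prod_hull.

Lemma prod_bigE n (F : 'I_n -> forall j, H j) j :
  (\big[@prod_add _ _ _ _ _ H/@prod_zero _ _ _ _ _ H]_(i < n) F i) j = \sum_(i < n) F i j.
Proof. by elim/big_rec2: _ => // i y1 y2 _ <-. Qed.

Lemma sqr_prod_norm (x : forall j, H j) : prod_norm x ^+ 2 = \sum_j hnorm (x j) ^+ 2.
Proof.
rewrite /prod_norm /prod_inner raddf_sum sqr_sqrtr.
  by apply: eq_bigr => j _; rewrite sqr_hnorm.
by apply: sumr_ge0 => j _; exact: hnorm2_ge0.
Qed.

Lemma prod_normE (x : forall j, H j) :
  prod_norm x = Num.sqrt (\sum_j hnorm (x j) ^+ 2).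
Proof. by rewrite -sqr_prod_norm sqrtr_sqr ger0_norm ?sqrtr_ge0. Qed.

Lemma hnorm_le_prod_norm (x : forall j, H j) j : hnorm (x j) <= prod_norm x.
Proof.
rewrite -(ler_pXn2r (n:=2)) ?nnegrE ?hnorm_ge0 ?sqrtr_ge0 // sqr_prod_norm.
by rewrite (bigD1 j) //= lerDl sumr_ge0 // => k _; exact: sqr_ge0.
Qed.

Lemma prod_hull_decomp z : prod_hull z ->
  exists2 c, nneg_unit_ball c &
    forall j, exists2 zeta, atom_hull (Sigma j) zeta & z j = ofR (c j) *: zeta.
Proof.
case=> n [w [u [w_ge0 w_sum1 u_atom ->]]].
pose c j := \sum_i w i * hnorm (u i j).
have c_ge0 j : 0 <= c j by apply: sumr_ge0 => i _; rewrite mulr_ge0 ?hnorm_ge0.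
exists c.
  split=> //; apply: le_trans (_ : \sum_j \sum_i w i * hnorm (u i j) ^+ 2 <= 1).
    by apply: ler_sum => j _; exact: convex_comb_sqr_le.
  rewrite exchange_big /= -w_sum1; apply: ler_sum => i _.
  by rewrite -mulr_sumr -sqr_prod_norm (proj2 (u_atom i)) expr1n mulr1.
move=> j; rewrite prod_bigE.
exact: cone_comb_scaled_hull (fun i => proj1 (u_atom i) j).
Qed.

Definition prod_cone_comb (W : R) (v : forall j, H j) :=
  exists n (w : 'I_n -> R) (u : 'I_n -> forall j, H j),
    [/\ forall l, 0 <= w l, forall l, prod_atoms (u l), \sum_l w l = W &
        forall j, v j = \sum_l ofR (w l) *: u l j].

Lemma prod_cone_comb_hull v : prod_cone_comb 1 v -> prod_hull v.
Proof.
case=> n [w [u [w_ge0 u_atom w_sum1 v_eq]]]; exists n, w, u; split => //.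
by apply: functional_extensionality_dep => j; rewrite prod_bigE v_eq.
Qed.

Lemma prod_cone_comb_atom u : prod_atoms u -> prod_cone_comb 1 u.
Proof.
move=> u_atom; exists 1%N, (fun=> 1), (fun=> u); split => //; first by rewrite big_ord1.
by move=> j; rewrite big_ord1 rmorph1 scale1r.
Qed.

Lemma prod_cone_comb0 : prod_cone_comb 0 (@prod_zero _ _ _ _ _ H).
Proof.
exists 0%N, (fun=> 0), (fun=> @prod_zero _ _ _ _ _ H); split; try by case.
  by rewrite big_ord0.
by move=> j; rewrite big_ord0.
Qed.

Lemma prod_cone_combZ a W v : 0 <= a -> prod_cone_comb W v ->
  prod_cone_comb (a * W) (prod_scale a v).
Proof.
move=> a_ge0 [n [w [u [w_ge0 u_atom w_sum v_eq]]]].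
exists n, (fun l => a * w l), u; split => //.
- by move=> l; rewrite mulr_ge0.
- by rewrite -mulr_sumr w_sum.
- move=> j; rewrite /prod_scale v_eq scaler_sumr; apply: eq_bigr => l _.
  by rewrite scalerA -rmorphM.
Qed.

Lemma prod_cone_combD W1 W2 v1 v2 : prod_cone_comb W1 v1 -> prod_cone_comb W2 v2 ->
  prod_cone_comb (W1 + W2) (prod_add v1 v2).
Proof.
move=> [n1 [w1 [u1 [w1_ge0 u1_atom w1_sum v1_eq]]]].
move=> [n2 [w2 [u2 [w2_ge0 u2_atom w2_sum v2_eq]]]].
pose w l := match fintype.split l with inl l1 => w1 l1 | inr l2 => w2 l2 end.
pose u l := match fintype.split l with inl l1 => u1 l1 | inr l2 => u2 l2 end.
have wl l1 : w (lshift n2 l1) = w1 l1 by rewrite /w (unsplitK (inl l1)).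
have wr l2 : w (rshift n1 l2) = w2 l2 by rewrite /w (unsplitK (inr l2)).
have ul l1 : u (lshift n2 l1) = u1 l1 by rewrite /u (unsplitK (inl l1)).
have ur l2 : u (rshift n1 l2) = u2 l2 by rewrite /u (unsplitK (inr l2)).
exists (n1 + n2)%N, w, u; split.
- by move=> l; rewrite /w; case: fintype.split.
- by move=> l; rewrite /u; case: fintype.split.
- by rewrite big_split_ord /= -w1_sum -w2_sum; congr (_ + _); apply: eq_bigr.
- move=> j; rewrite /prod_add v1_eq v2_eq big_split_ord /=.
  by congr (_ + _); apply: eq_bigr => l _; rewrite ?wl ?ul ?wr ?ur.
Qed.

Lemma prod_cone_comb_sum n (w : 'I_n -> R) (v : 'I_n -> forall j, H j) :
  (forall i, 0 <= w i) -> (forall i, prod_cone_comb 1 (v i)) ->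
  prod_cone_comb (\sum_i w i) (fun j => \sum_i ofR (w i) *: v i j).
Proof.
move=> w_ge0 v_comb.
have -> : (fun j => \sum_i ofR (w i) *: v i j) =
    \big[@prod_add _ _ _ _ _ H/@prod_zero _ _ _ _ _ H]_i prod_scale (w i) (v i).
  by apply: functional_extensionality_dep => j; rewrite prod_bigE.
elim/big_rec2: _ => [|i W y _ IH]; first exact: prod_cone_comb0.
by apply: prod_cone_combD IH; have := prod_cone_combZ (w_ge0 i) (v_comb i); rewrite mulr1.
Qed.

Lemma prod_atoms_scaled (s : 'I_J -> R) (a : forall j, H j) :
  (forall j, 0 <= s j) -> \sum_j s j ^+ 2 = 1 ->
  (forall j, cone_atoms (Sigma j) (a j)) -> prod_atoms (fun j => ofR (s j) *: a j).
Proof.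
move=> s_ge0 s_sum1 a_atom; split=> [j|]; first exact: Sigma_cone (proj1 (a_atom j)).
rewrite /unit_sphere /= prod_normE -[RHS]sqrtr1 -s_sum1; congr Num.sqrt.
by apply: eq_bigr => j _; rewrite hnormZ (proj2 (a_atom j)) mulr1 ger0_norm.
Qed.

(* The coordinates are replaced by hull elements one at a time: the map
   q |-> (s_j q_j)_j is affine in each q_j separately. *)
Lemma prod_cone_comb_scaled_hulls (s : 'I_J -> R) k (q : forall j, H j) :
  (forall j, 0 <= s j) -> \sum_j s j ^+ 2 = 1 -> (k <= J)%N ->
  (forall j : 'I_J, (k <= j)%N -> cone_atoms (Sigma j) (q j)) ->
  (forall j : 'I_J, (j < k)%N -> atom_hull (Sigma j) (q j)) ->
  prod_cone_comb 1 (fun j => ofR (s j) *: q j).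
Proof.
move=> s_ge0 s_sum1; elim: k q => [|k IH] q k_le q_atom q_hull.
  by apply/prod_cone_comb_atom/prod_atoms_scaled => // j; exact: q_atom.
pose k' := Ordinal k_le.
have [n [w [a [w_ge0 w_sum1 a_atom q_eq]]]] := q_hull k' (ltnSn k).
pose q_ i := dfwith q k' (a i).
have q_comb i : prod_cone_comb 1 (fun j => ofR (s j) *: q_ i j).
  apply: IH (ltnW k_le) _ _ => j; rewrite /q_; case: dfwithP => [|j' k'_neq] j_bound.
  - exact: a_atom.
  - apply: q_atom; rewrite ltn_neqAle j_bound andbT.
    by apply: contraNneq k'_neq => k_eq; apply/eqP/val_inj.
  - by rewrite ltnn in j_bound.
  - by apply: q_hull; exact: ltnW.
have := prod_cone_comb_sum w_ge0 q_comb; rewrite w_sum1.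
have q_k' i : q_ i k' = a i by exact: dfwith_in.
have q_out i j : k' != j -> q_ i j = q j by exact: dfwith_out.
congr prod_cone_comb; apply: functional_extensionality_dep => j.
case: (eqVneq k' j) => [<-|j_neq].
  rewrite q_eq scaler_sumr; apply: eq_bigr => i _.
  by rewrite q_k' !scalerA mulrC.
under eq_bigr => i _ do rewrite (q_out i j j_neq).
by rewrite -scaler_suml -rmorph_sum w_sum1 rmorph1 scale1r.
Qed.

Lemma prod_hull_scaled (s : 'I_J -> R) (z : forall j, H j) :
  (forall j, 0 <= s j) -> \sum_j s j ^+ 2 = 1 ->
  (forall j, atom_hull (Sigma j) (z j)) -> prod_hull (fun j => ofR (s j) *: z j).
Proof.
move=> s_ge0 s_sum1 z_hull; apply/prod_cone_comb_hull.
apply: (prod_cone_comb_scaled_hulls (k := J)) => // j j_ge.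
by rewrite leqNgt ltn_ord in j_ge.
Qed.

Lemma prod_closed_hull_scaled (s : 'I_J -> R) (b : forall j, H j) :
  (forall j, 0 <= s j) -> \sum_j s j ^+ 2 = 1 ->
  (forall j, closed_hull (Sigma j) (b j)) ->
  prod_closed_hull (fun j => ofR (s j) *: b j).
Proof.
move=> s_ge0 s_sum1 b_cl e e_gt0.
have e2_gt0 : 0 < e / 2 by rewrite divr_gt0.
have near_b j : exists z, atom_hull (Sigma j) z /\ hnorm (b j - z) < e / 2.
  by have [z z_hull close] := b_cl j _ e2_gt0; exists z.
pose z j := projT1 (cid (near_b j)).
have z_spec j : atom_hull (Sigma j) (z j) /\ hnorm (b j - z j) < e / 2 :=
  projT2 (cid (near_b j)).
exists (fun j => ofR (s j) *: z j).
  by apply: prod_hull_scaled => // j; case: (z_spec j).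
apply: (le_lt_trans (y := e / 2)); last by rewrite ltr_pdivrMr // ltr_pMr // ltr1n.
rewrite prod_normE -[leRHS](ger0_norm (ltW e2_gt0)) -sqrtr_sqr ler_sqrt ?sqr_ge0 //.
apply: le_trans (_ : \sum_j s j ^+ 2 * (e / 2) ^+ 2 <= _); last first.
  by rewrite -mulr_suml s_sum1 mul1r.
apply: ler_sum => j _.
rewrite /prod_add /prod_opp -scalerBr hnormZ exprMn ger0_norm // ler_wpM2l ?sqr_ge0 //.
by rewrite ler_pXn2r ?nnegrE ?hnorm_ge0 ?(ltW e2_gt0) // ltW // (proj2 (z_spec j)).
Qed.

Lemma prod_closed_hull_nonempty : (0 < J)%N -> exists u, prod_closed_hull u.
Proof.
move=> J_gt0; pose j0 := Ordinal J_gt0.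
pose a j := projT1 (cid (cone_atoms_nonempty (Sigma_cone j) (Sigma_nontrivial j))).
have a_atom j : cone_atoms (Sigma j) (a j) := projT2 (cid _).
pose s j : R := (j == j0)%:R.
exists (fun j => ofR (s j) *: a j); apply: prod_closed_hull_scaled.
- by move=> j; rewrite ler0n.
- rewrite (bigD1 j0) //= /s eqxx expr1n big1 ?addr0 // => j /negbTE ->.
  by rewrite expr0n.
- by move=> j; apply/atom_hull_sub_closed/atom_hull_atom.
Qed.

Definition prod_dilations (x : forall j, H j) : set R :=
  [set t | 0 <= t /\ dilate prod_scale t prod_closed_hull x].

Lemma prod_gaugeE x : prod_gauge ofR (prod_set Sigma) x = ereal_inf (EFin @` prod_dilations x).
Proof. by []. Qed.

Lemma prod_dilations_split x t : prod_dilations x t ->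
  exists2 c, nneg_unit_ball c & forall j, dilations (Sigma j) (x j) (t * c j).
Proof.
case=> t_ge0 [y y_cl <-].
pose P e c := nneg_unit_ball c /\ exists z, [/\ prod_hull z,
  prod_norm (prod_add y (prod_opp z)) < e &
  forall j, exists2 zeta, atom_hull (Sigma j) zeta & z j = ofR (c j) *: zeta].
have P_ne e : 0 < e -> P e !=set0.
  move=> /y_cl[z z_hull close]; have [c c_ball z_dec] := prod_hull_decomp z_hull.
  by exists c; split => //; exists z.
have P_mono e e' : 0 < e <= e' -> P e `<=` P e'.
  move=> /andP[_ le_ee'] c [c_ball [z [z_hull close z_dec]]].
  by split => //; exists z; split => //; exact: lt_le_trans le_ee'.
have [p p_ball p_near] := nneg_unit_ball_cluster P_ne P_mono (fun e _ c => @proj1 _ _).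
exists p => // j.
have [b b_cl yb] : exists2 b, closed_hull (Sigma j) b & y j = ofR (p j) *: b.
  apply: closed_hull_approx => // e e_gt0.
  have [c [_ [z [_ close z_dec]]] c_near] := p_near e e e_gt0 e_gt0.
  have [zeta zeta_hull zj] := z_dec j; exists (c j), zeta; split => //.
  by rewrite -zj; apply: le_lt_trans (hnorm_le_prod_norm _ j) close.
split; first by rewrite mulr_ge0 ?(proj1 p_ball j).
by exists b => //; rewrite /prod_scale yb scalerA -rmorphM.
Qed.

Lemma prod_dilations_merge x (ts : 'I_J -> R) : (0 < J)%N ->
  (forall j, dilations (Sigma j) (x j) (ts j)) ->
  prod_dilations x (Num.sqrt (\sum_j ts j ^+ 2)).
Proof.
move=> J_gt0 x_dil; set T := Num.sqrt _.
have ts_ge0 j : 0 <= ts j := proj1 (x_dil j).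
pose b j := s2val (cid2 (proj2 (x_dil j))).
have b_cl j : closed_hull (Sigma j) (b j) := s2valP (cid2 (proj2 (x_dil j))).
have b_eq j : ofR (ts j) *: b j = x j := s2valP' (cid2 (proj2 (x_dil j))).
have sum_ge0 : 0 <= \sum_j ts j ^+ 2 by apply: sumr_ge0 => j _; exact: sqr_ge0.
split; first exact: sqrtr_ge0.
have [T0|T_neq0] := eqVneq T 0.
  have ts0 j : ts j = 0.
    have sum0 : \sum_j ts j ^+ 2 = 0.
      by apply/eqP; rewrite eq_le sum_ge0 andbT -sqrtr_eq0; apply/eqP.
    have /eqP := @psumr_eq0P _ _ _ (fun j => ts j ^+ 2) (fun j _ => sqr_ge0 (ts j)) sum0 j isT.
    by rewrite sqrf_eq0 => /eqP.
  have [u u_cl] := prod_closed_hull_nonempty J_gt0; exists u => //.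
  apply: functional_extensionality_dep => j.
  by rewrite /prod_scale T0 -(b_eq j) ts0 rmorph0 !scale0r.
exists (fun j => ofR (ts j / T) *: b j).
  apply: prod_closed_hull_scaled => // [j|]; first by rewrite divr_ge0 ?sqrtr_ge0.
  under eq_bigr do rewrite expr_div_n.
  rewrite -mulr_suml sqr_sqrtr // mulfV //; apply: contraNneq T_neq0 => sum0.
  by rewrite /T sum0 sqrtr0.
apply: functional_extensionality_dep => j.
by rewrite /prod_scale /= scalerA -rmorphM mulrC divfK // b_eq.
Qed.

Lemma prod_gauge_sqr x : (0 < J)%N ->
  (prod_gauge ofR (prod_set Sigma) x * prod_gauge ofR (prod_set Sigma) x)%E
  = (\sum_j hgauge ofR (Sigma j) (x j) * hgauge ofR (Sigma j) (x j))%E.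
Proof.
move=> J_gt0; rewrite prod_gaugeE; under eq_bigr do rewrite hgaugeE.
apply: ereal_inf_sqr_sum => [t []|j t []|t|ts] //.
  exact: prod_dilations_split.
exact: prod_dilations_merge.
Qed.

End Product.

End ScalarField.


Lemma conjc_real (R : realType) (t : R) : conjc (real_complex R t) = real_complex R t.
Proof. by rewrite /= oppr0. Qed.

Lemma Re_conjc (R : realType) (a : R[i]) : complex.Re (conjc a) = complex.Re a.
Proof. by case: a. Qed.

Lemma Re_realM (R : realType) (t : R) (a : R[i]) :
  complex.Re (real_complex R t * a) = t * complex.Re a.
Proof. by case: a => a1 a2 /=; rewrite mul0r subr0. Qed.


Theorem lemma4 (R : realType) :
  (* real Hilbert spaces *)
  (forall (J : nat) (H : 'I_J -> hilbertSpace (K := R) id id)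
     (Sigma : forall j, set (H j)),
     (0 < J)%N ->
     (forall j, hcone id (Sigma j)) ->
     (forall j, exists2 s, Sigma j s & s <> 0) ->
     forall x : forall j, H j,
       (prod_gauge id (prod_set Sigma) x * prod_gauge id (prod_set Sigma) x)%E
       = (\sum_(j < J) (hgauge id (Sigma j) (x j) * hgauge id (Sigma j) (x j)))%E)
  /\
  (* complex Hilbert spaces *)
  (forall (J : nat) (H : 'I_J -> hilbertSpace (@conjc R) (@complex.Re R))
     (Sigma : forall j, set (H j)),
     (0 < J)%N ->
     (forall j, hcone (fun t : R => real_complex R t) (Sigma j)) ->
     (forall j, exists2 s, Sigma j s & s <> 0) ->
     forall x : forall j, H j,
       (prod_gauge (fun t : R => real_complex R t) (prod_set Sigma) x
          * prod_gauge (fun t : R => real_complex R t) (prod_set Sigma) x)%E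
       = (\sum_(j < J) (hgauge (fun t : R => real_complex R t) (Sigma j) (x j)
                        * hgauge (fun t : R => real_complex R t) (Sigma j) (x j)))%E).
Proof.
split=> J H Sigma J_gt0 Sigma_cone Sigma_nontrivial x.
  exact: (@prod_gauge_sqr R R idfun idfun idfun).
exact: (prod_gauge_sqr (@conjc_real R) (@Re_conjc R) (@Re_realM R)).
Qed.
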